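(* Let $\varphi\in\mathcal L$ be falsifiable (on some bi-relational model) and let $\Sigma$ be the set of subformulas of $\varphi$. Then $\varphi$ is falsified (i.e. $\varphi\notin\ell(w)$ for some world $w$) in some ultimately periodic $\Sigma$-quasimodel of height at most $|\Sigma|+1$.
   Context: $\mathcal L$: formulas with $\wedge,\vee,\Rightarrow,\Leftarrow,\mathsf X,\mathsf Y,\mathsf G,\mathsf H,\mathsf U,\mathsf S$. Bi-relational model: $(W,T,\le,S,[\![\cdot]\!])$ with $(W,\le)$ linear, $S$ a bijection on $T$, $[\![p]\!]$ downward closed in the first coordinate, Kripke clauses ($\Rightarrow$ looks at all $v\le w$, $\Leftarrow$ at some $v\ge w$ with $\varphi$ true and $\psi$ false) and linear-time clauses along $S$; falsifiable means $[\![\varphi]\!]\ne W\times T$ in some model. For subformula-closed $\Sigma$: a $\Sigma$-type is $\Phi\subseteq\Sigma$ with Boolean closure for $\wedge,\vee$, ($\varphi\Rightarrow\psi\in\Phi$ implies $\varphi\notin\Phi$ or $\psi\in\Phi$; $\psi\in\Phi$ implies $\varphi\Rightarrow\psi\in\Phi$), ($\varphi\Leftarrow\psi\in\Phi$ implies $\varphi\in\Phi$; $\varphi\in\Phi,\psi\notin\Phi$ imply $\varphi\Leftarrow\psi\in\Phi$). A $\Sigma$-labelled space is $(W,\le,\ell)$, $(W,\le)$ a disjoint union of linear posets (its linear components), $\ell$ into $\Sigma$-types, $w\le v\Rightarrow\ell(w)\supseteq\ell(v)$, with $\Rightarrow$-formulas outside $\ell(w)$ witnessed at some $v\le w$ and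 $\Leftarrow$-formulas in $\ell(w)$ witnessed at some $v\ge w$. A relation $R$ is convex (images/preimages of points convex), fully confluent (forth–down: $x\le x'Ry'\Rightarrow\exists y\,xRy\le y'$; forth–up: $x'\ge xRy\Rightarrow\exists y'\,x'Ry'\ge y$; back–down: $x'Ry'\ge y\Rightarrow\exists x\,x'\ge xRy$; back–up: $xRy\le y'\Rightarrow\exists x'\,x\le x'Ry'$), bi-serial, and sensible (for each $wRv$ and formulas in $\Sigma$: $\mathsf X\varphi\in\ell(w)\iff\varphi\in\ell(v)$; $\mathsf Y\varphi\in\ell(v)\iff\varphi\in\ell(w)$; $\mathsf G\varphi\in\ell(w)\iff\varphi\in\ell(w)\wedge\mathsf G\varphi\in\ell(v)$; $\mathsf H\varphi\in\ell(v)\iff\varphi\in\ell(v)\wedge\mathsf H\varphi\in\ell(w)$; $\varphi\,\mathsf U\,\psi\in\ell(w)\iff\psi\in\ell(w)\vee(\varphi\in\ell(w)\wedge\varphi\,\mathsf U\,\psi\in\ell(v))$; $\varphi\,\mathsf S\,\psi\in\ell(v)\iff\psi\in\ell(v)\vee(\varphi\in\ell(v)\wedge\varphi\,\mathsf S\,\psi\in\ell(w))$), and $\omega$-sensible ($\mathsf G\varphi\in\Sigma\setminus\ell(w)$ gives $v$ with $wR^nv$, $\varphi\notin\ell(v)$; $\mathsf H\varphi\in\Sigma\setminus\ell(w)$ gives $v$ with $vR^nw$, $\varphi\notin\ell(v)$; $\varphi\,\mathsf U\,\psi\in\ell(w)$ gives $v$ with $wR^nv$, $\psi\in\ell(v)$;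 $\varphi\,\mathsf S\,\psi\in\ell(w)$ gives $v$ with $vR^nw$, $\psi\in\ell(v)$; $n\ge0$). A $\Sigma$-quasimodel is a $\Sigma$-labelled space with a bi-serial, fully confluent, convex, sensible, $\omega$-sensible relation. Height: supremum of $n$ with a chain $w_1<\dots<w_n$. An ultimately periodic $\Sigma$-quasimodel is a $\Sigma$-quasimodel $(W,\le,\ell,R)$ for which there exist integers $i,i'\ge0$, $l,l'\ge1$ and a map $\pi\colon W\to T:=\{-(i'+l'-1),\dots,i+l-1\}$ such that each fibre $\pi^{-1}(t)$ is exactly one linear component of $W$, and $wRv$ implies $\pi(w)R_T\pi(v)$, where $R_T$ consists of the pairs $(k,k+1)$ for $-(i'+l'-1)\le k\le i+l-2$ together with $(i+l-1,i)$ and $(-i',-(i'+l'-1))$ (a ''double lasso'': a middle segment through $0$ with a loop at each end). *)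

From Stdlib Require Import List ZArith Sorted.
Import ListNotations.

Inductive form : Type :=
| Var   : nat -> form
| And   : form -> form -> form
| Or    : form -> form -> form
| Imp   : form -> form -> form
| Coimp : form -> form -> form
| Next  : form -> form
| Prev  : form -> form
| Glob  : form -> form
| Hist  : form -> form
| Until : form -> form -> form
| Since : form -> form -> form.

Definition form_eq_dec (a b : form) : {a = b} + {a <> b}.
Proof. decide equality; apply PeanoNat.Nat.eq_dec. Defined.

Fixpoint subf (f : form) : list form :=
  f :: match f with
       | Var _ => []
       | And a b | Or a b | Imp a b | Coimp a b | Until a b | Since a b =>
           subf a ++ subf b
       | Next a | Prev a | Glob a | Hist a => subf a
       end.

Definition card_sub (f : form) : nat := length (nodup form_eq_dec (subf f)).

Definition is_linear_order {W : Type} (le : W -> W -> Prop) : Prop :=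
  (forall x, le x x) /\
  (forall x y z, le x y -> le y z -> le x z) /\
  (forall x y, le x y -> le y x -> x = y) /\
  (forall x y, le x y \/ le y x).

Definition iterate {T : Type} (n : nat) (f : T -> T) (t : T) : T := Nat.iter n f t.

Fixpoint sat {W T : Type} (le : W -> W -> Prop) (S Sinv : T -> T)
  (V : nat -> W -> T -> Prop) (f : form) (w : W) (t : T) : Prop :=
  match f with
  | Var p => V p w t
  | And a b => sat le S Sinv V a w t /\ sat le S Sinv V b w t
  | Or a b => sat le S Sinv V a w t \/ sat le S Sinv V b w t
  | Imp a b => forall v, le v w -> sat le S Sinv V a v t -> sat le S Sinv V b v t
  | Coimp a b => exists v, le w v /\ sat le S Sinv V a v t /\ ~ sat le S Sinv V b v t
  | Next a => sat le S Sinv V a w (S t)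
  | Prev a => sat le S Sinv V a w (Sinv t)
  | Glob a => forall n, sat le S Sinv V a w (iterate n S t)
  | Hist a => forall n, sat le S Sinv V a w (iterate n Sinv t)
  | Until a b => exists n, sat le S Sinv V b w (iterate n S t) /\
                  forall k, k < n -> sat le S Sinv V a w (iterate k S t)
  | Since a b => exists n, sat le S Sinv V b w (iterate n Sinv t) /\
                  forall k, k < n -> sat le S Sinv V a w (iterate k Sinv t)
  end.

Definition falsifiable (phi : form) : Prop :=
  exists (W T : Type) (le : W -> W -> Prop) (S Sinv : T -> T)
         (V : nat -> W -> T -> Prop),
    is_linear_order le /\
    (forall t, S (Sinv t) = t) /\ (forall t, Sinv (S t) = t) /\
    (forall p w v t, le v w -> V p w t -> V p v t) /\
    exists w t, ~ sat le S Sinv V phi w t.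

Definition is_type (Sig : list form) (P : form -> Prop) : Prop :=
  (forall f, P f -> In f Sig) /\
  (forall a b, In (And a b) Sig -> (P (And a b) <-> P a /\ P b)) /\
  (forall a b, In (Or a b) Sig -> (P (Or a b) <-> P a \/ P b)) /\
  (forall a b, In (Imp a b) Sig ->
     (P (Imp a b) -> ~ P a \/ P b) /\ (P b -> P (Imp a b))) /\
  (forall a b, In (Coimp a b) Sig ->
     (P (Coimp a b) -> P a) /\ (P a -> ~ P b -> P (Coimp a b))).

Definition comparable {W : Type} (le : W -> W -> Prop) (x y : W) : Prop :=
  le x y \/ le y x.

(* (W, le) is a disjoint union of linear posets: a partial order whose
   comparability relation is transitive (its classes are the linear components) *)
Definition disjoint_union_of_linear {W : Type} (le : W -> W -> Prop) : Prop :=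
  (forall x, le x x) /\
  (forall x y z, le x y -> le y z -> le x z) /\
  (forall x y, le x y -> le y x -> x = y) /\
  (forall x y z, comparable le x y -> comparable le y z -> comparable le x z).

Definition labelled_space (Sig : list form) {W : Type}
  (le : W -> W -> Prop) (l : W -> form -> Prop) : Prop :=
  disjoint_union_of_linear le /\
  (forall w, is_type Sig (l w)) /\
  (forall w v f, le w v -> l v f -> l w f) /\
  (forall w a b, In (Imp a b) Sig -> ~ l w (Imp a b) ->
     exists v, le v w /\ l v a /\ ~ l v b) /\
  (forall w a b, l w (Coimp a b) -> exists v, le w v /\ l v a /\ ~ l v b).

Fixpoint iterR {W : Type} (R : W -> W -> Prop) (n : nat) (w v : W) : Prop :=
  match n with
  | O => w = v
  | S n => exists u, R w u /\ iterR R n u v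
  end.

Definition convex {W : Type} (le : W -> W -> Prop) (R : W -> W -> Prop) : Prop :=
  (forall x y1 y2 z, R x y1 -> R x y2 -> le y1 z -> le z y2 -> R x z) /\
  (forall y x1 x2 z, R x1 y -> R x2 y -> le x1 z -> le z x2 -> R z y).

Definition fully_confluent {W : Type} (le : W -> W -> Prop) (R : W -> W -> Prop)
  : Prop :=
  (forall x x' y', le x x' -> R x' y' -> exists y, R x y /\ le y y') /\
  (forall x x' y, le x x' -> R x y -> exists y', R x' y' /\ le y y') /\
  (forall x' y' y, R x' y' -> le y y' -> exists x, le x x' /\ R x y) /\
  (forall x y y', R x y -> le y y' -> exists x', le x x' /\ R x' y').

Definition bi_serial {W : Type} (R : W -> W -> Prop) : Prop :=
  (forall x, exists y, R x y) /\ (forall y, exists x, R x y).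

Definition sensible (Sig : list form) {W : Type} (l : W -> form -> Prop)
  (R : W -> W -> Prop) : Prop :=
  forall w v, R w v ->
  (forall a, In (Next a) Sig -> (l w (Next a) <-> l v a)) /\
  (forall a, In (Prev a) Sig -> (l v (Prev a) <-> l w a)) /\
  (forall a, In (Glob a) Sig -> (l w (Glob a) <-> l w a /\ l v (Glob a))) /\
  (forall a, In (Hist a) Sig -> (l v (Hist a) <-> l v a /\ l w (Hist a))) /\
  (forall a b, In (Until a b) Sig ->
     (l w (Until a b) <-> l w b \/ (l w a /\ l v (Until a b)))) /\
  (forall a b, In (Since a b) Sig ->
     (l v (Since a b) <-> l v b \/ (l v a /\ l w (Since a b)))).

Definition omega_sensible (Sig : list form) {W : Type} (l : W -> form -> Prop)
  (R : W -> W -> Prop) : Prop :=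
  (forall w a, In (Glob a) Sig -> ~ l w (Glob a) ->
     exists n v, iterR R n w v /\ ~ l v a) /\
  (forall w a, In (Hist a) Sig -> ~ l w (Hist a) ->
     exists n v, iterR R n v w /\ ~ l v a) /\
  (forall w a b, l w (Until a b) -> exists n v, iterR R n w v /\ l v b) /\
  (forall w a b, l w (Since a b) -> exists n v, iterR R n v w /\ l v b).

Definition quasimodel (Sig : list form) {W : Type} (le : W -> W -> Prop)
  (l : W -> form -> Prop) (R : W -> W -> Prop) : Prop :=
  labelled_space Sig le l /\ bi_serial R /\ fully_confluent le R /\
  convex le R /\ sensible Sig l R /\ omega_sensible Sig l R.

(* R_T on T = {-(i'+l'-1), ..., i+l-1} : the "double lasso" *)
Definition RT (i i' l l' : nat) (a b : Z) : Prop :=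
  let lo := (- (Z.of_nat i' + Z.of_nat l' - 1))%Z in
  let hi := (Z.of_nat i + Z.of_nat l - 1)%Z in
  ((lo <= a <= hi - 1)%Z /\ b = (a + 1)%Z) \/
  (a = hi /\ b = Z.of_nat i) \/
  (a = (- Z.of_nat i')%Z /\ b = lo).

Definition ultimately_periodic (Sig : list form) {W : Type}
  (le : W -> W -> Prop) (l : W -> form -> Prop) (R : W -> W -> Prop) : Prop :=
  quasimodel Sig le l R /\
  exists (i i' l0 l0' : nat) (pi : W -> Z),
    1 <= l0 /\ 1 <= l0' /\
    (forall w, (- (Z.of_nat i' + Z.of_nat l0' - 1) <= pi w <= Z.of_nat i + Z.of_nat l0 - 1)%Z) /\
    (* each fibre pi^{-1}(t), t in T, is exactly one linear component *)
    (forall t, (- (Z.of_nat i' + Z.of_nat l0' - 1) <= t <= Z.of_nat i + Z.of_nat l0 - 1)%Z ->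
       (exists w, pi w = t) /\
       (forall w v, pi w = t -> (pi v = t <-> comparable le w v))) /\
    (forall w v, R w v -> RT i i' l0 l0' (pi w) (pi v)).

Definition height_le {W : Type} (le : W -> W -> Prop) (h : nat) : Prop :=
  forall c : list W, Sorted (fun x y => le x y /\ x <> y) c -> length c <= h.

(* Fix a bi-relational model falsifying [phi] at [(wstar, tstar)] and let Sig
   be the subformulas of [phi].  Times on the S-orbit of [tstar] are numbered
   by integers, and a pair (time n, world w) gets the label [lab n w], the
   Sig-type of w at time n.  The moment of a time is the finite set of labels
   realized at it.  By the infinite pigeonhole principle, and because only
   finitely many eventualities (failing G/H, holding U/S) can be pending at a
   given time, we find u0 <= u1 < 0 <= t0 <= t1 such that time t1+1 has the
   moment of t0, time u1+1 that of u0, every future eventuality at t0 is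
   fulfilled by t1 and every past eventuality at u1 is fulfilled after u0.

   The quasimodel consists of the realized labels at positions u0..t1,
   ordered by reverse inclusion; R links labels realized by one world at
   consecutive times along the double lasso u0 -> ... -> t1 -> t0, u1 -> u0.
   Each quasimodel condition is checked separately (Construction section);
   omega-sensibility is where the choice of the loops is used, and the height
   bound holds because strictly decreasing labels are strictly shorter. *)

From Stdlib Require Import List ZArith Sorted.
From Stdlib Require Import Lia Classical ClassicalEpsilon ProofIrrelevance.
Import ListNotations.

Lemma subf_refl f : In f (subf f).
Proof. destruct f; simpl; auto. Qed.

Lemma subf_trans f g h : In g (subf f) -> In h (subf g) -> In h (subf f).
Proof.
  revert g h; induction f; intros g h Hg Hh; simpl in Hg; destruct Hg as [<-|Hg]; auto;
  simpl; right; try (apply in_app_or in Hg; apply in_or_app; destruct Hg as [Hg|Hg];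
    [left; eauto | right; eauto]); eauto.
Qed.

(* Closes goals [In g (subf phi)] for an immediate subformula [g] of a
   formula [H : In f (subf phi)]. *)
Ltac subformula H :=
  eapply subf_trans; [exact H | simpl; auto 6 using in_or_app, subf_refl].

Lemma iter_shift {T} (f : T -> T) n x : Nat.iter n f (f x) = f (Nat.iter n f x).
Proof. induction n; simpl; congruence. Qed.

Lemma chain_length_bound {A} (Rl : A -> A -> Prop) (m : A -> nat) :
  (forall x y, Rl x y -> m y < m x) ->
  forall c x, Sorted Rl (x :: c) -> length (x :: c) <= m x + 1.
Proof.
  intros Hm. induction c as [|y c IH]; intros x Hs; simpl; [lia|].
  inversion Hs as [|? ? Hsy Hhd]; subst. inversion Hhd; subst.
  specialize (IH y Hsy). apply Hm in H0. simpl in IH. lia.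
Qed.

Fixpoint sublists {A} (L : list A) : list (list A) :=
  match L with
  | [] => [[]]
  | x :: L' => map (cons x) (sublists L') ++ sublists L'
  end.

Lemma filter_in_sublists {A} (L : list A) g : In (filter g L) (sublists L).
Proof.
  induction L as [|a L IH]; simpl; auto.
  apply in_or_app. destruct (g a); [left; apply in_map|right]; auto.
Qed.

Lemma infinite_pigeonhole {A} (L : list A) : forall (f : nat -> A),
  (forall n, In (f n) L) -> exists a, forall N, exists n, N <= n /\ f n = a.
Proof.
  induction L as [|a L IH]; intros f Hf.
  - destruct (Hf 0).
  - destruct (classic (forall N, exists n, N <= n /\ f n = a)) as [H|H].
    + exists a; auto.
    + apply not_all_ex_not in H as [N0 H].
      destruct (IH (fun k => f (k + N0))) as [a' Ha'].
      * intros k. destruct (Hf (k + N0)) as [E|E]; auto.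
        exfalso. apply H. exists (k + N0). split; [lia|auto].
      * exists a'. intros N. destruct (Ha' N) as [n [Hn E]].
        exists (n + N0). split; [lia|auto].
Qed.

Lemma uniform_bound {B} (keys : list B) (Q : B -> nat -> Prop) :
  (forall b N N', N <= N' -> Q b N -> Q b N') ->
  (forall b, In b keys -> exists N, Q b N) -> exists N, forall b, In b keys -> Q b N.
Proof.
  intros Hm. induction keys as [|b keys IH]; intros H.
  - exists 0. intros b [].
  - destruct (H b (or_introl eq_refl)) as [Nb Hb].
    destruct IH as [N HN]; [intros; apply H; right; auto|].
    exists (Nat.max Nb N). intros b' [<-|Hb'].
    + apply Hm with Nb; auto. lia.
    + apply Hm with N; auto. lia.
Qed.

Lemma finite_witness_bound {A B} (keys : list B) (key : A -> B)
  (D : A -> Prop) (P : A -> nat -> Prop) :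
  (forall a, D a -> In (key a) keys) ->
  (forall a, D a -> exists n, P a n) ->
  exists N, forall a, D a -> exists a' n, D a' /\ key a' = key a /\ n <= N /\ P a' n.
Proof.
  intros Hkeys Hwit.
  destruct (uniform_bound keys (fun b N => forall a, D a -> key a = b ->
      exists a' n, D a' /\ key a' = b /\ n <= N /\ P a' n)) as [N HN].
  - intros b N N' HNN' H a Ha Hb.
    destruct (H a Ha Hb) as (a' & n & ? & ? & ? & ?). exists a', n. repeat split; auto; lia.
  - intros b _. destruct (classic (exists a0, D a0 /\ key a0 = b)) as [(a0 & Ha0 & Hb)|Hno].
    + destruct (Hwit a0 Ha0) as [n Hn]. exists n. intros a _ _. exists a0, n. auto.
    + exists 0. intros a Ha Hb. exfalso. eauto.
  - exists N. intros a Ha. exact (HN (key a) (Hkeys a Ha) a Ha eq_refl).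
Qed.

Lemma iterR_app {W} (R : W -> W -> Prop) n m x y z :
  iterR R n x y -> iterR R m y z -> iterR R (n + m) x z.
Proof.
  revert x. induction n; simpl; intros x H1 H2.
  - subst; auto.
  - destruct H1 as [u [Hu H1]]. exists u. split; eauto.
Qed.

Section Model.
Variables (W0 T0 : Type) (le0 : W0 -> W0 -> Prop) (S Sinv : T0 -> T0)
  (V : nat -> W0 -> T0 -> Prop).
Hypothesis Hlin : is_linear_order le0.
Hypothesis HSS : forall t, S (Sinv t) = t.
Hypothesis HSS' : forall t, Sinv (S t) = t.
Hypothesis HV : forall p w v t, le0 v w -> V p w t -> V p v t.

Notation sat := (sat le0 S Sinv V).

Lemma le0_refl x : le0 x x. Proof. apply Hlin. Qed.
Lemma le0_trans x y z : le0 x y -> le0 y z -> le0 x z. Proof. apply Hlin. Qed.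
Lemma le0_tot x y : le0 x y \/ le0 y x. Proof. apply Hlin. Qed.

Lemma persist f : forall w v t, le0 v w -> sat f w t -> sat f v t.
Proof.
  induction f; simpl; intros w v t Hvw H; eauto.
  - destruct H; split; eauto.
  - destruct H; [left|right]; eauto.
  - intros u Hu. apply H. eapply le0_trans; eauto.
  - destruct H as [u [Hu H]]. exists u. split; auto. eapply le0_trans; eauto.
  - destruct H as [n [Hn Hk]]. exists n. split; eauto.
  - destruct H as [n [Hn Hk]]. exists n. split; eauto.
Qed.

Lemma sem_glob a w t : sat (Glob a) w t <-> sat a w t /\ sat (Glob a) w (S t).
Proof.
  simpl; unfold iterate; split.
  - intros H. split; [apply (H 0)|]. intros n. rewrite iter_shift. apply (H (Datatypes.S n)).
  - intros [H1 H2] [|n]; simpl; auto. rewrite <- iter_shift. apply H2.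
Qed.

Lemma sem_hist a w t : sat (Hist a) w (S t) <-> sat a w (S t) /\ sat (Hist a) w t.
Proof.
  simpl; unfold iterate; split.
  - intros H. split; [apply (H 0)|]. intros n. specialize (H (Datatypes.S n)).
    simpl in H. rewrite <- iter_shift, HSS' in H. exact H.
  - intros [H1 H2] [|n]; simpl; auto. rewrite <- iter_shift, HSS'. apply H2.
Qed.

Lemma sem_until a b w t : sat (Until a b) w t <->
  sat b w t \/ (sat a w t /\ sat (Until a b) w (S t)).
Proof.
  simpl; unfold iterate; split.
  - intros [[|n] [Hb Ha]]; [left; exact Hb|right].
    split; [apply (Ha 0); lia|].
    exists n. split; [rewrite iter_shift; exact Hb|].
    intros k Hk. rewrite iter_shift. apply (Ha (Datatypes.S k)); lia.
  - intros [Hb|[Ha [n [Hb Hk]]]].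
    + exists 0. split; auto. intros; lia.
    + exists (Datatypes.S n). split; [simpl; rewrite <- iter_shift; exact Hb|].
      intros [|k] Hk'; [exact Ha|]. simpl. rewrite <- iter_shift. apply Hk. lia.
Qed.

Lemma sem_since a b w t : sat (Since a b) w (S t) <->
  sat b w (S t) \/ (sat a w (S t) /\ sat (Since a b) w t).
Proof.
  simpl; unfold iterate; split.
  - intros [[|n] [Hb Ha]]; [left; exact Hb|right].
    split; [apply (Ha 0); lia|].
    exists n. split; [simpl in Hb; rewrite <- iter_shift, HSS' in Hb; exact Hb|].
    intros k Hk. specialize (Ha (Datatypes.S k)). simpl in Ha.
    rewrite <- iter_shift, HSS' in Ha. apply Ha; lia.
  - intros [Hb|[Ha [n [Hb Hk]]]].
    + exists 0. split; auto. intros; lia.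
    + exists (Datatypes.S n). split; [simpl; rewrite <- iter_shift, HSS'; exact Hb|].
      intros [|k] Hk'; [exact Ha|]. simpl. rewrite <- iter_shift, HSS'. apply Hk. lia.
Qed.

Variable tstar : T0.
Variable wstar : W0.

Definition time (n : Z) : T0 :=
  if Z.leb 0 n then Nat.iter (Z.to_nat n) S tstar else Nat.iter (Z.to_nat (- n)) Sinv tstar.

Lemma time_succ n : time (n + 1) = S (time n).
Proof.
  unfold time. destruct (Z.leb_spec 0 n).
  - destruct (Z.leb_spec 0 (n+1)); [|lia].
    replace (Z.to_nat (n+1)) with (Datatypes.S (Z.to_nat n)) by lia. reflexivity.
  - destruct (Z.eq_dec n (-1)).
    + subst. simpl. rewrite HSS. reflexivity.
    + destruct (Z.leb_spec 0 (n+1)); [lia|].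
      replace (Z.to_nat (-n)) with (Datatypes.S (Z.to_nat (-(n+1)))) by lia.
      simpl. rewrite HSS. reflexivity.
Qed.

Lemma time_fwd k n : Nat.iter k S (time n) = time (n + Z.of_nat k).
Proof.
  induction k; simpl; [f_equal; lia|].
  rewrite IHk, <- time_succ. f_equal; lia.
Qed.

Lemma time_bwd k n : Nat.iter k Sinv (time n) = time (n - Z.of_nat k).
Proof.
  induction k; simpl; [f_equal; lia|].
  rewrite IHk.
  replace (n - Z.of_nat k)%Z with ((n - Z.of_nat (Datatypes.S k)) + 1)%Z by lia.
  rewrite time_succ, HSS'. reflexivity.
Qed.

Definition bdec (P : Prop) : bool := if excluded_middle_informative P then true else false.
Lemma bdec_true P : bdec P = true <-> P.
Proof.
  unfold bdec. destruct (excluded_middle_informative P); split; intros; auto;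
    try discriminate; contradiction.
Qed.

Variable phi : form.
Definition Sig := subf phi.
Definition Signd := nodup form_eq_dec Sig.

Definition lab (n : Z) (w : W0) : list form :=
  filter (fun f => bdec (sat f w (time n))) Signd.

Lemma in_lab f n w : In f (lab n w) <-> In f Sig /\ sat f w (time n).
Proof.
  unfold lab. rewrite filter_In, bdec_true. unfold Signd. rewrite nodup_In. tauto.
Qed.

Lemma lab_nodup n w : NoDup (lab n w).
Proof. apply NoDup_filter, NoDup_nodup. Qed.

Lemma lab_mono n w v : le0 v w -> incl (lab n w) (lab n v).
Proof.
  intros H f Hf. apply in_lab in Hf. apply in_lab. destruct Hf; split; auto.
  eapply persist; eauto.
Qed.

Lemma lab_antisym n w n' w' :
  incl (lab n w) (lab n' w') -> incl (lab n' w') (lab n w) -> lab n w = lab n' w'.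
Proof.
  intros H1 H2. apply filter_ext_in. intros f Hf.
  destruct (bdec (sat f w (time n))) eqn:E1, (bdec (sat f w' (time n'))) eqn:E2; auto.
  - assert (In f (lab n' w')) as Hin by (apply H1, filter_In; auto).
    apply filter_In in Hin as [_ Hin]. congruence.
  - assert (In f (lab n w)) as Hin by (apply H2, filter_In; auto).
    apply filter_In in Hin as [_ Hin]. congruence.
Qed.

Lemma lab_tot n w v : incl (lab n w) (lab n v) \/ incl (lab n v) (lab n w).
Proof. destruct (le0_tot w v) as [H|H]; [right|left]; apply lab_mono; auto. Qed.

Lemma lab_sandwich n w1 w w2 :
  le0 w1 w -> le0 w w2 -> lab n w1 = lab n w2 -> lab n w = lab n w1.
Proof.
  intros H1 H2 E. apply lab_antisym; [apply lab_mono; auto|].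
  rewrite E. apply lab_mono; auto.
Qed.

Lemma lab_eq_sat n w m v g : lab n w = lab m v -> In g Sig ->
  (sat g w (time n) <-> sat g v (time m)).
Proof.
  intros E HS. split; intro H.
  - assert (Hin : In g (lab n w)) by (apply in_lab; auto).
    rewrite E in Hin. apply in_lab in Hin. tauto.
  - assert (Hin : In g (lab m v)) by (apply in_lab; auto).
    rewrite <- E in Hin. apply in_lab in Hin. tauto.
Qed.

Lemma type_lab n w : is_type Sig (fun f => In f (lab n w)).
Proof.
  unfold is_type. setoid_rewrite in_lab. unfold Sig.
  split; [tauto|]. split; [|split; [|split]].
  - intros a b H. assert (Ha_sub : In a (subf phi)) by subformula H.
    assert (Hb_sub : In b (subf phi)) by subformula H. simpl. tauto.
  - intros a b H. assert (Ha_sub : In a (subf phi)) by subformula H.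
    assert (Hb_sub : In b (subf phi)) by subformula H. simpl. tauto.
  - intros a b H. assert (Ha_sub : In a (subf phi)) by subformula H.
    assert (Hb_sub : In b (subf phi)) by subformula H. simpl. split.
    + intros [_ H1]. destruct (classic (sat a w (time n))) as [Ha|Ha]; [|tauto].
      right. split; auto. apply H1; auto. apply le0_refl.
    + intros [_ H1]. split; auto. intros v Hv _. eapply persist; eauto.
  - intros a b H. assert (Ha_sub : In a (subf phi)) by subformula H.
    assert (Hb_sub : In b (subf phi)) by subformula H. simpl. split.
    + intros [_ [v [Hv [H1 _]]]]. split; auto. eapply persist; eauto.
    + intros [_ H1] H2. split; auto. exists w. split; [apply le0_refl|]. tauto.
Qed.

(* Future eventualities: a G-formula that fails, or a U-formula that holds,
   is [fut_pending]; it is fulfilled at the first time where [fut_goal]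
   holds (the body of G fails, resp. the right argument of U holds). *)
Definition fut_pending (f : form) (w : W0) (t : T0) : Prop :=
  match f with
  | Glob a => ~ sat (Glob a) w t
  | Until a b => sat (Until a b) w t
  | _ => False
  end.

Definition fut_goal (f : form) (w : W0) (t : T0) : Prop :=
  match f with
  | Glob a => ~ sat a w t
  | Until _ b => sat b w t
  | _ => False
  end.

Definition past_pending (f : form) (w : W0) (t : T0) : Prop :=
  match f with
  | Hist a => ~ sat (Hist a) w t
  | Since a b => sat (Since a b) w t
  | _ => False
  end.

Definition past_goal (f : form) (w : W0) (t : T0) : Prop :=
  match f with
  | Hist a => ~ sat a w t
  | Since _ b => sat b w t
  | _ => False
  end.

Lemma fut_pending_step f w t : fut_pending f w t -> ~ fut_goal f w t -> fut_pending f w (S t).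
Proof.
  destruct f; cbn [fut_pending fut_goal]; try tauto.
  - rewrite sem_glob. tauto.
  - rewrite sem_until. tauto.
Qed.

Lemma past_pending_step f w t :
  past_pending f w (S t) -> ~ past_goal f w (S t) -> past_pending f w t.
Proof.
  destruct f; cbn [past_pending past_goal]; try tauto.
  - rewrite sem_hist. tauto.
  - rewrite sem_since. tauto.
Qed.

Lemma fut_pending_until f w n k : fut_pending f w (time n) ->
  (exists j, j < k /\ fut_goal f w (time (n + Z.of_nat j))) \/
  fut_pending f w (time (n + Z.of_nat k)).
Proof.
  intros Hp. induction k as [|k [(j & Hj & Hg)|Hk]].
  - right. replace (n + Z.of_nat 0)%Z with n by lia. exact Hp.
  - left. exists j. split; [lia|exact Hg].
  - destruct (classic (fut_goal f w (time (n + Z.of_nat k)))) as [Hg|Hg].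
    + left. exists k. split; [lia|exact Hg].
    + right. replace (n + Z.of_nat (Datatypes.S k))%Z with (n + Z.of_nat k + 1)%Z by lia.
      rewrite time_succ. apply fut_pending_step; auto.
Qed.

Lemma past_pending_until f w n k : past_pending f w (time n) ->
  (exists j, j < k /\ past_goal f w (time (n - Z.of_nat j))) \/
  past_pending f w (time (n - Z.of_nat k)).
Proof.
  intros Hp. induction k as [|k [(j & Hj & Hg)|Hk]].
  - right. replace (n - Z.of_nat 0)%Z with n by lia. exact Hp.
  - left. exists j. split; [lia|exact Hg].
  - destruct (classic (past_goal f w (time (n - Z.of_nat k)))) as [Hg|Hg].
    + left. exists k. split; [lia|exact Hg].
    + right. apply past_pending_step.
      * rewrite <- time_succ. replace (n - Z.of_nat (Datatypes.S k) + 1)%Z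
          with (n - Z.of_nat k)%Z by lia. exact Hk.
      * rewrite <- time_succ. replace (n - Z.of_nat (Datatypes.S k) + 1)%Z
          with (n - Z.of_nat k)%Z by lia. exact Hg.
Qed.

Lemma fut_pending_fulfilled f w n :
  fut_pending f w (time n) -> exists k, fut_goal f w (time (n + Z.of_nat k)).
Proof.
  destruct f; cbn [fut_pending fut_goal]; try tauto; simpl; unfold iterate.
  - intros H. apply not_all_ex_not in H as [k Hk]. exists k. rewrite <- time_fwd. exact Hk.
  - intros [k [Hb _]]. exists k. rewrite <- time_fwd. exact Hb.
Qed.

Lemma past_pending_fulfilled f w n :
  past_pending f w (time n) -> exists k, past_goal f w (time (n - Z.of_nat k)).
Proof.
  destruct f; cbn [past_pending past_goal]; try tauto; simpl; unfold iterate.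
  - intros H. apply not_all_ex_not in H as [k Hk]. exists k. rewrite <- time_bwd. exact Hk.
  - intros [k [Hb _]]. exists k. rewrite <- time_bwd. exact Hb.
Qed.

Lemma fut_pending_transfer n w m v f : lab n w = lab m v -> In f Sig ->
  fut_pending f w (time n) -> fut_pending f v (time m).
Proof.
  intros E HS. destruct f; cbn [fut_pending]; try tauto; rewrite (lab_eq_sat _ _ _ _ _ E HS); tauto.
Qed.

Lemma past_pending_transfer n w m v f : lab n w = lab m v -> In f Sig ->
  past_pending f w (time n) -> past_pending f v (time m).
Proof.
  intros E HS. destruct f; cbn [past_pending]; try tauto; rewrite (lab_eq_sat _ _ _ _ _ E HS); tauto.
Qed.

Lemma past_goal_transfer n w m v f : lab n w = lab m v -> In f Sig ->
  past_goal f w (time n) -> past_goal f v (time m).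
Proof.
  intros E HS. destruct f; cbn [past_goal]; try tauto.
  - assert (Hsub : In f Sig) by (unfold Sig in *; subformula HS).
    rewrite (lab_eq_sat _ _ _ _ _ E Hsub); tauto.
  - assert (Hsub : In f2 Sig) by (unfold Sig in *; subformula HS).
    rewrite (lab_eq_sat _ _ _ _ _ E Hsub); tauto.
Qed.

Definition Mom (a b : Z) : Prop := forall w, exists w', lab b w' = lab a w.

(* The moment of a time: the set of its realized labels, as a list drawn
   from a fixed finite list of candidates. *)
Definition code (n : Z) : list (list form) :=
  filter (fun L => bdec (exists w, lab n w = L)) (sublists Signd).

Lemma code_in n : In (code n) (sublists (sublists Signd)).
Proof. apply filter_in_sublists. Qed.

Lemma code_mom a b : code a = code b -> Mom a b.
Proof.
  intros E w.
  assert (H : In (lab a w) (code a)).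
  { apply filter_In. split; [apply filter_in_sublists|]. apply bdec_true. eauto. }
  rewrite E in H. apply filter_In in H as [_ H]. apply (proj1 (bdec_true _)) in H.
  destruct H as [w1 H]. eauto.
Qed.

Definition fut_decided (t0 t1 : Z) : Prop :=
  forall w f, In f Sig -> fut_pending f w (time t0) ->
  exists w' (n : nat), lab t0 w' = lab t0 w /\ (t0 + Z.of_nat n <= t1)%Z /\
    fut_goal f w' (time (t0 + Z.of_nat n)).

Definition past_decided (u0 u1 : Z) : Prop :=
  forall w f, In f Sig -> past_pending f w (time u1) ->
  exists w' (n : nat), lab u1 w' = lab u1 w /\ (u0 <= u1 - Z.of_nat n)%Z /\
    past_goal f w' (time (u1 - Z.of_nat n)).

(* Since there are finitely many labels and formulas, all eventualities at a
   given time are decided within a bounded horizon. *)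
Lemma fut_bound t0 : exists N : nat, fut_decided t0 (t0 + Z.of_nat N).
Proof.
  destruct (finite_witness_bound (list_prod (sublists Signd) Sig)
    (fun a => (lab t0 (fst a), snd a))
    (fun a => In (snd a) Sig /\ fut_pending (snd a) (fst a) (time t0))
    (fun a n => fut_goal (snd a) (fst a) (time (t0 + Z.of_nat n)))) as [N HN].
  - intros [w f] [HS _]. apply in_prod; [apply filter_in_sublists|exact HS].
  - intros [w f] [_ Hp]. exact (fut_pending_fulfilled f w t0 Hp).
  - exists N. intros w f HS Hp.
    destruct (HN (w, f) (conj HS Hp)) as ([w' f'] & n & _ & Ekey & Hn & Hg).
    injection Ekey as E1 E2. simpl in *. subst f'.
    exists w', n. repeat split; auto. lia.
Qed.

Lemma past_bound u1 : exists N : nat, past_decided (u1 - Z.of_nat N) u1.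
Proof.
  destruct (finite_witness_bound (list_prod (sublists Signd) Sig)
    (fun a => (lab u1 (fst a), snd a))
    (fun a => In (snd a) Sig /\ past_pending (snd a) (fst a) (time u1))
    (fun a n => past_goal (snd a) (fst a) (time (u1 - Z.of_nat n)))) as [N HN].
  - intros [w f] [HS _]. apply in_prod; [apply filter_in_sublists|exact HS].
  - intros [w f] [_ Hp]. exact (past_pending_fulfilled f w u1 Hp).
  - exists N. intros w f HS Hp.
    destruct (HN (w, f) (conj HS Hp)) as ([w' f'] & n & _ & Ekey & Hn & Hg).
    injection Ekey as E1 E2. simpl in *. subst f'.
    exists w', n. repeat split; auto. lia.
Qed.

Section Construction.
(* The two loops of the double lasso: positions [u0..t1], with time [t1 + 1]
   carrying the moment of [t0] and time [u1 + 1] that of [u0]. *)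
Variables u0 u1 t0 t1 : Z.
Hypothesis Hord : (u0 <= u1 /\ u1 <= t0 /\ t0 <= t1)%Z.
Hypothesis Hloop_future : code (t1 + 1) = code t0.
Hypothesis Hloop_past : code (u1 + 1) = code u0.
Hypothesis Hfut : fut_decided t0 t1.
Hypothesis Hpast : past_decided u0 u1.

Definition Edge (p q : Z) : Prop :=
  ((u0 <= p < t1)%Z /\ q = (p + 1)%Z) \/ (p = t1 /\ q = t0) \/ (p = u1 /\ q = u0).

Lemma edge_moment p q : Edge p q -> Mom (p + 1) q /\ Mom q (p + 1).
Proof.
  intros [[_ ->]|[[-> ->]|[-> ->]]].
  - split; intro w; exists w; reflexivity.
  - split; apply code_mom; congruence.
  - split; apply code_mom; congruence.
Qed.

Lemma edge_bnd p q : Edge p q -> (u0 <= q <= t1)%Z.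
Proof. unfold Edge. lia. Qed.

Definition Pt : Type :=
  {x : Z * list form | (u0 <= fst x <= t1)%Z /\ exists w, snd x = lab (fst x) w}.
Definition pos (x : Pt) : Z := fst (proj1_sig x).
Definition lb (x : Pt) : list form := snd (proj1_sig x).

Definition mk (p : Z) (w : W0) (H : (u0 <= p <= t1)%Z) : Pt :=
  exist _ (p, lab p w) (conj H (ex_intro _ w eq_refl)).

Ltac simpl_pt := cbn [pos lb mk proj1_sig fst snd] in *.

Lemma pt_eq (x y : Pt) : pos x = pos y -> lb x = lb y -> x = y.
Proof.
  destruct x as [[p s] Hx], y as [[q r] Hy]; unfold pos, lb; simpl; intros -> ->.
  f_equal. apply proof_irrelevance.
Qed.

Lemma pt_real (x : Pt) : exists w, lb x = lab (pos x) w.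
Proof. destruct (proj2_sig x) as [_ H]; exact H. Qed.

Lemma pt_bnd (x : Pt) : (u0 <= pos x <= t1)%Z.
Proof. destruct (proj2_sig x) as [H _]; exact H. Qed.

Definition Qle (x y : Pt) : Prop := pos x = pos y /\ incl (lb y) (lb x).
Definition Ql (x : Pt) (f : form) : Prop := In f (lb x).
Definition QR (x y : Pt) : Prop :=
  Edge (pos x) (pos y) /\ exists w, lb x = lab (pos x) w /\ lb y = lab (pos x + 1) w.

Lemma pt_eq_incl (x y : Pt) :
  pos x = pos y -> incl (lb x) (lb y) -> incl (lb y) (lb x) -> x = y.
Proof.
  intros Hp H1 H2. apply pt_eq; auto.
  destruct (pt_real x) as [wx Ex], (pt_real y) as [wy Ey].
  rewrite Ex, Ey in *. rewrite Hp in *. apply lab_antisym; auto.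
Qed.

Lemma pt_comparable (x y : Pt) : pos x = pos y -> comparable Qle x y.
Proof.
  intros Hp. destruct (pt_real x) as [wx Ex], (pt_real y) as [wy Ey].
  destruct (lab_tot (pos x) wx wy) as [I|I]; [right|left]; split; auto;
    rewrite Ex, Ey, <- Hp; auto.
Qed.

Lemma mk_below (x : Pt) w v : lb x = lab (pos x) w -> le0 v w ->
  Qle (mk (pos x) v (pt_bnd x)) x.
Proof. intros E H. split; [reflexivity|]. rewrite E. apply lab_mono, H. Qed.

Lemma mk_above (x : Pt) w v : lb x = lab (pos x) w -> le0 w v ->
  Qle x (mk (pos x) v (pt_bnd x)).
Proof. intros E H. split; [reflexivity|]. rewrite E. apply lab_mono, H. Qed.

Lemma Q_order : disjoint_union_of_linear Qle.
Proof.
  split; [|split; [|split]].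
  - intro x. split; [reflexivity|apply incl_refl].
  - intros x y z [E1 I1] [E2 I2]. split; [congruence|eapply incl_tran; eauto].
  - intros x y [E I1] [_ I2]. apply pt_eq_incl; auto.
  - intros x y z Hxy Hyz. apply pt_comparable.
    destruct Hxy as [[]|[]], Hyz as [[]|[]]; congruence.
Qed.

Lemma Q_labelled : labelled_space Sig Qle Ql.
Proof.
  split; [exact Q_order|]. split; [|split; [|split]].
  - intros x. destruct (pt_real x) as [w E]. unfold Ql. rewrite E. apply type_lab.
  - intros x y f [_ I] Hf. exact (I f Hf).
  - intros x a b HS Hn. destruct (pt_real x) as [w E]. unfold Ql in Hn.
    rewrite E, in_lab in Hn.
    assert (Ha_sub : In a Sig) by (unfold Sig in *; subformula HS).
    assert (Hb_sub : In b Sig) by (unfold Sig in *; subformula HS).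
    assert (Hv : exists v, le0 v w /\ sat a v (time (pos x)) /\ ~ sat b v (time (pos x))).
    { apply NNPP. intro Hno. apply Hn. split; [exact HS|]. intros v Hv Ha.
      apply NNPP. intro Hb. apply Hno. eauto. }
    destruct Hv as (v & Hv & Ha & Hb). exists (mk (pos x) v (pt_bnd x)).
    split; [exact (mk_below x w v E Hv)|]. unfold Ql. simpl_pt. rewrite !in_lab. tauto.
  - intros x a b Hc. destruct (pt_real x) as [w E]. unfold Ql in Hc.
    rewrite E, in_lab in Hc. destruct Hc as [HS (v & Hv & Ha & Hb)].
    assert (Ha_sub : In a Sig) by (unfold Sig in *; subformula HS).
    exists (mk (pos x) v (pt_bnd x)).
    split; [exact (mk_above x w v E Hv)|]. unfold Ql. simpl_pt. rewrite !in_lab. tauto.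
Qed.

Lemma succ_pt p q w : Edge p q -> exists y : Pt, pos y = q /\ lb y = lab (p + 1) w.
Proof.
  intros HE. destruct (edge_moment p q HE) as [M _]. destruct (M w) as [w' Hw'].
  exists (mk q w' (edge_bnd p q HE)). split; auto.
Qed.

Lemma Q_biserial : bi_serial QR.
Proof.
  split.
  - intros x. destruct (pt_real x) as [w E]. pose proof (pt_bnd x).
    assert (HE : exists q, Edge (pos x) q).
    { destruct (Z.eq_dec (pos x) t1).
      - exists t0. right; left; auto.
      - exists (pos x + 1)%Z. left. split; [lia|auto]. }
    destruct HE as [q HE]. destruct (succ_pt _ _ w HE) as [y [Py Ly]].
    exists y. split; [rewrite Py; auto|]. exists w. auto.
  - intros y. destruct (pt_real y) as [w E]. pose proof (pt_bnd y).
    assert (HE : exists p, (u0 <= p <= t1)%Z /\ Edge p (pos y)).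
    { destruct (Z.eq_dec (pos y) u0).
      - exists u1. split; [lia|]. right; right; auto.
      - exists (pos y - 1)%Z. split; [lia|]. left. split; lia. }
    destruct HE as [p [Hp HE]]. destruct (edge_moment p (pos y) HE) as [_ M].
    destruct (M w) as [v Hv].
    exists (mk p v Hp). split; [exact HE|]. exists v. simpl_pt. split; congruence.
Qed.

(* Confluence: compare the world realizing the given point with the world
   behind the given R-step; either the step can be copied by the smaller
   world, or the two points coincide. *)
Lemma Q_confluent : fully_confluent Qle QR.
Proof.
  split; [|split; [|split]].
  - intros x x' y' [Hp Hi] [HE [w' [E1 E2]]]. destruct (pt_real x) as [w Ex].
    destruct (le0_tot w w') as [Hw|Hw].
    + destruct (succ_pt _ _ w HE) as [y [Py Ly]]. exists y. split.
      * split; [rewrite Py, Hp; exact HE|]. exists w. rewrite Ly, <- Hp. auto.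
      * split; [congruence|]. rewrite E2, Ly. apply lab_mono; auto.
    + assert (x = x') as <-.
      { apply pt_eq_incl; auto. rewrite Ex, E1, Hp. apply lab_mono; auto. }
      exists y'. split; [split; eauto|apply Q_order].
  - intros x x' y [Hp Hi] [HE [w [E1 E2]]]. destruct (pt_real x') as [w' Ex'].
    destruct (le0_tot w w') as [Hw|Hw].
    + destruct (succ_pt _ _ w' HE) as [y' [Py Ly]]. exists y'. split.
      * split; [rewrite Py, <- Hp; exact HE|]. exists w'. rewrite Ly, Hp. auto.
      * split; [congruence|]. rewrite E2, Ly. apply lab_mono; auto.
    + assert (x = x') as <-.
      { apply pt_eq_incl; auto. rewrite Ex', E1, Hp. apply lab_mono; auto. }
      exists y. split; [split; eauto|apply Q_order].
  - intros x' y' y [HE [w' [E1 E2]]] [Hp Hi]. destruct (pt_real y) as [wy Ey].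
    destruct (edge_moment _ _ HE) as [_ M]. destruct (M wy) as [v Hv].
    destruct (le0_tot v w') as [Hw|Hw].
    + exists (mk (pos x') v (pt_bnd x')). split.
      * split; [reflexivity|]. simpl_pt. rewrite E1. apply lab_mono; auto.
      * split; [simpl_pt; rewrite Hp; exact HE|]. exists v. simpl_pt.
        rewrite Ey, Hp, Hv. auto.
    + assert (y = y') as <-.
      { apply pt_eq_incl; auto. rewrite E2, Ey, Hp, <- Hv. apply lab_mono; auto. }
      exists x'. split; [apply Q_order|split; eauto].
  - intros x y y' [HE [w [E1 E2]]] [Hp Hi]. destruct (pt_real y') as [wy Ey].
    destruct (edge_moment _ _ HE) as [_ M]. destruct (M wy) as [v Hv].
    destruct (le0_tot w v) as [Hw|Hw].
    + exists (mk (pos x) v (pt_bnd x)). split.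
      * split; [reflexivity|]. simpl_pt. rewrite E1. apply lab_mono; auto.
      * split; [simpl_pt; rewrite <- Hp; exact HE|]. exists v. simpl_pt.
        rewrite Ey, <- Hp, Hv. auto.
    + assert (y = y') as <-.
      { apply pt_eq_incl; auto. rewrite E2, Ey, <- Hp, <- Hv. apply lab_mono; auto. }
      exists x. split; [apply Q_order|split; eauto].
Qed.

(* Convexity: a point between two R-successors (predecessors) of a point is
   itself one, by sandwiching its realizing world between theirs. *)
Lemma Q_convex : convex Qle QR.
Proof.
  split.
  - intros x y1 y2 z [HE1 [w1 [E11 E12]]] [HE2 [w2 [E21 E22]]] [Hp1 Hi1] [Hp2 Hi2].
    destruct (pt_real z) as [wz Ez].
    assert (HEz : Edge (pos x) (pos z)) by (rewrite <- Hp1; auto).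
    destruct (edge_moment _ _ HEz) as [_ M]. destruct (M wz) as [v Hv].
    rewrite <- Ez in Hv.
    destruct (le0_tot v w1) as [Hw|Hw].
    + assert (z = y1) as -> by (apply pt_eq_incl; auto; rewrite <- Hv, E12; apply lab_mono; auto).
      split; eauto.
    + destruct (le0_tot v w2) as [Hw'|Hw'].
      * split; auto. exists v. split; auto.
        rewrite E11. symmetry. apply lab_sandwich with w2; auto. congruence.
      * assert (z = y2) as -> by (apply pt_eq_incl; auto; rewrite <- Hv, E22; apply lab_mono; auto).
        split; eauto.
  - intros y x1 x2 z [HE1 [w1 [E11 E12]]] [HE2 [w2 [E21 E22]]] [Hp1 Hi1] [Hp2 Hi2].
    destruct (pt_real z) as [wz Ez].
    destruct (le0_tot wz w1) as [Hw|Hw].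
    + assert (z = x1) as -> by (apply pt_eq_incl; auto; rewrite Ez, E11, Hp1; apply lab_mono; auto).
      split; eauto.
    + destruct (le0_tot wz w2) as [Hw'|Hw'].
      * split; [rewrite <- Hp1; auto|]. exists wz. split; auto.
        rewrite E12, Hp1. symmetry. apply lab_sandwich with w2; auto.
        rewrite <- Hp1, <- E12, E22, <- Hp2, Hp1. auto.
      * assert (z = x2) as -> by (apply pt_eq_incl; auto; rewrite Ez, E21, Hp2; apply lab_mono; auto).
        split; eauto.
Qed.

(* Sensibility is the one-step unfolding of the temporal operators. *)
Lemma Q_sensible : sensible Sig Ql QR.
Proof.
  intros x y [HE [w [E1 E2]]]. unfold Ql. rewrite E1, E2.
  split; [|split; [|split; [|split; [|split]]]];
    [intros a H..|intros a b H|intros a b H]; rewrite !in_lab, time_succ;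
    assert (In a Sig) by (unfold Sig in *; subformula H).
  - simpl. tauto.
  - simpl. rewrite HSS'. tauto.
  - rewrite sem_glob. tauto.
  - rewrite sem_hist. tauto.
  - assert (In b Sig) by (unfold Sig in *; subformula H). rewrite sem_until. tauto.
  - assert (In b Sig) by (unfold Sig in *; subformula H). rewrite sem_since. tauto.
Qed.

Lemma path_fwd (k : nat) : forall (x y : Pt) w, lb x = lab (pos x) w ->
  pos y = (pos x + Z.of_nat k)%Z -> lb y = lab (pos y) w -> iterR QR k x y.
Proof.
  induction k; intros x y w Ex Py Ey; simpl.
  - apply pt_eq; [lia|]. rewrite Ex, Ey. f_equal. lia.
  - pose proof (pt_bnd x). pose proof (pt_bnd y).
    assert (Hz : (u0 <= pos x + 1 <= t1)%Z) by lia.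
    exists (mk _ w Hz). split.
    + split; [left; simpl_pt; split; [lia|auto]|]. exists w. simpl_pt. auto.
    + apply IHk with w; simpl_pt; auto. lia.
Qed.

(* A future eventuality pending at a point is fulfilled further along R:
   either before position [t1], or else it is still pending at time [t1 + 1],
   hence (same moment) at [t0] for some world, and [Hfut] fulfils it. *)
Lemma fut_omega (x : Pt) w f : In f Sig -> lb x = lab (pos x) w ->
  fut_pending f w (time (pos x)) ->
  exists n (y : Pt) v, iterR QR n x y /\ lb y = lab (pos y) v /\ fut_goal f v (time (pos y)).
Proof.
  intros HS Ex Hp. pose proof (pt_bnd x). pose proof Hord.
  destruct (fut_pending_until f w (pos x) (Z.to_nat (t1 + 1 - pos x)) Hp)
    as [(j & Hj & Hg)|Hlate].
  - assert (B : (u0 <= pos x + Z.of_nat j <= t1)%Z) by lia.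
    exists j, (mk _ w B), w. split; [apply path_fwd with w; auto|auto].
  - replace (pos x + Z.of_nat (Z.to_nat (t1 + 1 - pos x)))%Z with (t1 + 1)%Z in Hlate by lia.
    assert (HE : Edge t1 t0) by (right; left; auto).
    destruct (edge_moment _ _ HE) as [M _]. destruct (M w) as [w' E'].
    destruct (Hfut w' f HS (fut_pending_transfer _ _ _ _ _ (eq_sym E') HS Hlate))
      as (w'' & n & E'' & Hn & Hg).
    assert (B1 : (u0 <= t1 <= t1)%Z) by lia.
    assert (B2 : (u0 <= t0 <= t1)%Z) by lia.
    assert (B3 : (u0 <= t0 + Z.of_nat n <= t1)%Z) by lia.
    exists (Z.to_nat (t1 - pos x) + (1 + n))%nat, (mk _ w'' B3), w''.
    split; [|split; auto].
    apply iterR_app with (mk t1 w B1); [apply path_fwd with w; simpl_pt; auto; lia|].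
    exists (mk t0 w'' B2). split; [|apply path_fwd with w''; auto].
    split; [exact HE|]. exists w. simpl_pt. split; congruence.
Qed.

(* Mirror image for past eventualities, going back to [u0], then through the
   loop [u1 -> u0] to time [u1 + 1] and [u1], where [Hpast] fulfils them. *)
Lemma past_omega (x : Pt) w f : In f Sig -> lb x = lab (pos x) w ->
  past_pending f w (time (pos x)) ->
  exists n (y : Pt) v, iterR QR n y x /\ lb y = lab (pos y) v /\ past_goal f v (time (pos y)).
Proof.
  intros HS Ex Hp. pose proof (pt_bnd x). pose proof Hord.
  destruct (past_pending_until f w (pos x) (Z.to_nat (pos x - u0)) Hp)
    as [(j & Hj & Hg)|Hearly].
  - assert (B : (u0 <= pos x - Z.of_nat j <= t1)%Z) by lia.
    exists j, (mk _ w B), w. split; [apply path_fwd with w; simpl_pt; auto; lia|auto].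
  - replace (pos x - Z.of_nat (Z.to_nat (pos x - u0)))%Z with u0 in Hearly by lia.
    assert (B0 : (u0 <= u0 <= t1)%Z) by lia.
    assert (P0 : iterR QR (Z.to_nat (pos x - u0)) (mk u0 w B0) x)
      by (apply path_fwd with w; simpl_pt; auto; lia).
    assert (HE : Edge u1 u0) by (right; right; auto).
    destruct (edge_moment _ _ HE) as [_ M]. destruct (M w) as [w' E'].
    pose proof (past_pending_transfer _ _ _ _ _ (eq_sym E') HS Hearly) as Hp'.
    destruct (past_pending_until f w' (u1 + 1) 1 Hp') as [(j & Hj & Hg)|Hp1].
    + assert (j = 0) as -> by lia.
      replace (u1 + 1 - Z.of_nat 0)%Z with (u1 + 1)%Z in Hg by lia.
      exists (Z.to_nat (pos x - u0)), (mk u0 w B0), w. split; [exact P0|split; auto].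
      exact (past_goal_transfer _ _ _ _ _ E' HS Hg).
    + replace (u1 + 1 - Z.of_nat 1)%Z with u1 in Hp1 by lia.
      destruct (Hpast w' f HS Hp1) as (w'' & n & E'' & Hn & Hg).
      assert (B1 : (u0 <= u1 <= t1)%Z) by lia.
      assert (B3 : (u0 <= u1 - Z.of_nat n <= t1)%Z) by lia.
      exists (n + (1 + Z.to_nat (pos x - u0)))%nat, (mk _ w'' B3), w''.
      split; [|split; auto].
      apply iterR_app with (mk u1 w'' B1); [apply path_fwd with w''; simpl_pt; auto; lia|].
      exists (mk u0 w B0). split; [|exact P0].
      split; [exact HE|]. exists w'. simpl_pt. split; congruence.
Qed.

Lemma Q_omega : omega_sensible Sig Ql QR.
Proof.
  unfold Ql. split; [|split; [|split]].
  - intros x a HS Hn. destruct (pt_real x) as [w Ex]. rewrite Ex, in_lab in Hn.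
    destruct (fut_omega x w (Glob a) HS Ex) as (n & y & v & P & Ey & Hg);
      [cbn [fut_pending]; tauto|].
    exists n, y. split; [exact P|]. rewrite Ey, in_lab. cbn [fut_goal] in Hg. tauto.
  - intros x a HS Hn. destruct (pt_real x) as [w Ex]. rewrite Ex, in_lab in Hn.
    destruct (past_omega x w (Hist a) HS Ex) as (n & y & v & P & Ey & Hg);
      [cbn [past_pending]; tauto|].
    exists n, y. split; [exact P|]. rewrite Ey, in_lab. cbn [past_goal] in Hg. tauto.
  - intros x a b Hu. destruct (pt_real x) as [w Ex]. rewrite Ex, in_lab in Hu.
    destruct Hu as [HS Hu].
    assert (In b Sig) by (unfold Sig in *; subformula HS).
    destruct (fut_omega x w (Until a b) HS Ex Hu) as (n & y & v & P & Ey & Hg).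
    exists n, y. split; [exact P|]. rewrite Ey, in_lab. auto.
  - intros x a b Hs. destruct (pt_real x) as [w Ex]. rewrite Ex, in_lab in Hs.
    destruct Hs as [HS Hs].
    assert (In b Sig) by (unfold Sig in *; subformula HS).
    destruct (past_omega x w (Since a b) HS Ex Hs) as (n & y & v & P & Ey & Hg).
    exists n, y. split; [exact P|]. rewrite Ey, in_lab. auto.
Qed.

(* Positions, shifted by [u1], index the double lasso with
   [i = t0 - u1], [i' = 0], [l = t1 - t0 + 1], [l' = u1 - u0 + 1]. *)
Lemma Q_periodic : ultimately_periodic Sig Qle Ql QR.
Proof.
  pose proof Hord.
  split.
  { split; [exact Q_labelled|]. split; [exact Q_biserial|]. split; [exact Q_confluent|].
    split; [exact Q_convex|]. split; [exact Q_sensible|exact Q_omega]. }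
  exists (Z.to_nat (t0 - u1)), 0, (Z.to_nat (t1 - t0 + 1)), (Z.to_nat (u1 - u0 + 1)),
    (fun x => pos x - u1)%Z.
  split; [lia|]. split; [lia|]. split; [intros x; pose proof (pt_bnd x); lia|]. split.
  - intros t Ht. split.
    + assert (B : (u0 <= t + u1 <= t1)%Z) by lia.
      exists (mk _ wstar B). simpl_pt. lia.
    + intros x y Hx. split.
      * intros Hy. apply pt_comparable. lia.
      * intros [[E _]|[E _]]; lia.
  - intros x y [HE _]. unfold RT, Edge in *. lia.
Qed.

(* Strictly decreasing points have strictly shorter labels, and every label
   has at most [card_sub phi] elements. *)
Lemma Q_height : height_le Qle (card_sub phi + 1).
Proof.
  intros c Hs. destruct c as [|x c]; simpl; [lia|].
  eapply Nat.le_trans.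
  - apply (chain_length_bound (fun x y : Pt => Qle x y /\ x <> y) (fun x => length (lb x)));
      [|exact Hs].
    intros x' y [[Hp Hi] Hn].
    destruct (le_lt_dec (length (lb x')) (length (lb y))) as [Hle|Hlt]; [|exact Hlt].
    exfalso. apply Hn. apply pt_eq_incl; auto.
    apply NoDup_length_incl; auto.
    destruct (pt_real y) as [wy ->]. apply lab_nodup.
  - destruct (pt_real x) as [w ->]. unfold card_sub, lab.
    pose proof (filter_length_le (fun f => bdec (sat f w (time (pos x)))) Signd).
    unfold Signd, Sig in *. lia.
Qed.

End Construction.

Lemma future_loop : exists t0 t1,
  (0 <= t0 <= t1)%Z /\ code (t1 + 1) = code t0 /\ fut_decided t0 t1.
Proof.
  destruct (infinite_pigeonhole _ (fun k => code (Z.of_nat k)) (fun k => code_in _)) as [c Hc].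
  destruct (Hc 0) as [k0 [_ E0]].
  destruct (fut_bound (Z.of_nat k0)) as [N HN].
  destruct (Hc (k0 + N + 1)) as [k1 [Hk1 E1]].
  exists (Z.of_nat k0), (Z.of_nat k1 - 1)%Z. split; [lia|]. split.
  - replace (Z.of_nat k1 - 1 + 1)%Z with (Z.of_nat k1) by lia. congruence.
  - intros w f HS Hp. destruct (HN w f HS Hp) as (w' & n & E & Hn & Hg).
    exists w', n. repeat split; auto. lia.
Qed.

Lemma past_loop : exists u0 u1,
  (u0 <= u1 < 0)%Z /\ code (u1 + 1) = code u0 /\ past_decided u0 u1.
Proof.
  destruct (infinite_pigeonhole _ (fun k => code (- Z.of_nat k)) (fun k => code_in _))
    as [c Hc].
  destruct (Hc 1) as [k0 [Hk0 E0]].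
  destruct (past_bound (- Z.of_nat k0 - 1)) as [N HN].
  destruct (Hc (k0 + N + 1)) as [k1 [Hk1 E1]].
  exists (- Z.of_nat k1)%Z, (- Z.of_nat k0 - 1)%Z. split; [lia|]. split.
  - replace (- Z.of_nat k0 - 1 + 1)%Z with (- Z.of_nat k0)%Z by lia. congruence.
  - intros w f HS Hp. destruct (HN w f HS Hp) as (w' & n & E & Hn & Hg).
    exists w', n. repeat split; auto. lia.
Qed.

(* The model falsifies [phi] at time 0, which lies between the loops. *)
Lemma falsified_in_periodic_quasimodel : ~ sat phi wstar tstar ->
  exists (W : Type) (le : W -> W -> Prop) (l : W -> form -> Prop) (R : W -> W -> Prop),
    ultimately_periodic (subf phi) le l R /\
    height_le le (card_sub phi + 1) /\
    exists w, ~ l w phi.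
Proof.
  intros Hphi.
  destruct future_loop as (t0 & t1 & Ht & EF & DF).
  destruct past_loop as (u0 & u1 & Hu & EP & DP).
  assert (Hord : (u0 <= u1 /\ u1 <= t0 /\ t0 <= t1)%Z) by lia.
  exists (Pt u0 t1), (Qle u0 t1), (Ql u0 t1), (QR u0 u1 t0 t1). split; [|split].
  - exact (Q_periodic u0 u1 t0 t1 Hord EF EP DF DP).
  - exact (Q_height u0 t1).
  - assert (B : (u0 <= 0 <= t1)%Z) by lia.
    exists (mk u0 t1 0 wstar B). unfold Ql. cbn [lb mk proj1_sig snd]. rewrite in_lab. intros [_ H]. exact (Hphi H).
Qed.

End Model.

Theorem theorem11p4 (phi : form) :
  falsifiable phi ->
  exists (W : Type) (le : W -> W -> Prop) (l : W -> form -> Prop)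
         (R : W -> W -> Prop),
    ultimately_periodic (subf phi) le l R /\
    height_le le (card_sub phi + 1) /\
    exists w, ~ l w phi.
Proof.
  intros (W0 & T0 & le0 & S & Sinv & V & Hlin & HSS & HSS' & HV & w & t & Hn).
  exact (falsified_in_periodic_quasimodel W0 T0 le0 S Sinv V Hlin HSS HSS' HV t w phi Hn).
Qed.
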